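(* Let $\gamma\in(1,3)$ and $\mu\in(0,1)$. At the point $B=(U_B,H_B)=(1,0)$ there exist two distinct branches of integral curves of $\frac{dH}{dU}=\frac{F(H,U)}{G(H,U)}$, with slopes $C_1(U_B,H_B)=0$ and $C_2(U_B,H_B)=\frac{\gamma(1-\mu)}{1+k_2}$. Moreover, there exists exactly one integral curve passing through $B$ along each of these branches, both integral curves are smooth at $B$, and the integral curve corresponding to the slope $0$ is precisely $H\equiv0$.
   Context: $k_1=\frac{(\gamma+1)+\mu(3-\gamma)}{2}$, $k_2=\frac{2(1-\mu)}{\gamma-1}$, $F(H,U)=2H[H-(U^2-k_1U+\mu)]$, $G(H,U)=H(U+k_2)-U(U-1)(U-\mu)$. Integral curves through $B$ are trajectories of $\frac{dH}{ds}=F$, $\frac{dU}{ds}=G$ converging to the equilibrium $B$ (where $F=G=0$ and $(U-1)^2-H=0$). *)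

From Stdlib Require Import Reals.
From Coquelicot Require Import Coquelicot.
Open Scope R_scope.

Definition k1 (gamma mu : R) : R := ((gamma + 1) + mu * (3 - gamma)) / 2.
Definition k2 (gamma mu : R) : R := 2 * (1 - mu) / (gamma - 1).

Definition Ffun (gamma mu H U : R) : R :=
  2 * H * (H - (U ^ 2 - k1 gamma mu * U + mu)).
Definition Gfun (gamma mu H U : R) : R :=
  H * (U + k2 gamma mu) - U * (U - 1) * (U - mu).

(* A (local) integral curve of dH/dU = F(H,U)/G(H,U) through B = (U,H) = (1,0),
   given as a graph H = h(U) on (1 - delta, 1 + delta): h(1) = 0, h is
   differentiable on the interval (so the curve has a tangent slope h'(1) at B),
   and away from B the ODE holds (with G <> 0 there). *)
Definition integral_curve_through_B (gamma mu delta : R) (h : R -> R) : Prop :=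
  0 < delta /\
  h 1 = 0 /\
  (forall U, Rabs (U - 1) < delta -> ex_derive h U) /\
  (forall U, 0 < Rabs (U - 1) < delta ->
     Gfun gamma mu (h U) U <> 0 /\
     Derive h U = Ffun gamma mu (h U) U / Gfun gamma mu (h U) U).

Definition smooth_near_1 (delta : R) (h : R -> R) : Prop :=
  forall (n : nat) U, Rabs (U - 1) < delta -> ex_derive_n h n U.

(* Blow B up by writing H = (U - 1) r: then F = (U - 1) F_blowup(r, U) and
   G = (U - 1) G_blowup(r, U), with F_blowup(m, 1) = m a and G_blowup(m, 1) = m b - c, where
   a = (gamma - 1)(1 - mu), b = 1 + k2, c = 1 - mu.
   Along an integral curve of slope m, r tends to m, and by the mean value theorem the chord
   slopes h(V)/(V - 1) are values h'(xi) = F_blowup/G_blowup at points xi -> 1; in the limit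
   m (m b - c) = m a, so m = 0 or m = (a + c)/b = C2.
   For two curves with the same slope m, m b <> c, the difference of the blown-up fields is
   (r1 - r2) Q / (G_blowup1 G_blowup2) with Q -> -a c < 0, so (h1 - h2)^2 increases towards B,
   where it vanishes. For C2, H = (U - 1) w(U - 1) with w a power series whose
   coefficients are forced recursively (the divisor a (n + 2) + c never vanishes); the
   majorant A M^j / (j + 1)^2, stable under convolution up to the factor 8, shows that w has
   a positive radius of convergence, so the curve is analytic. *)

From Stdlib Require Import Reals Lra Lia Psatz Wf_nat IndefiniteDescription.
From Coquelicot Require Import Coquelicot.
Open Scope R_scope.

Lemma is_lim_mult_R (f g : R -> R) (x : Rbar) (lf lg : R) :
  is_lim f x lf -> is_lim g x lg -> is_lim (fun y => f y * g y) x (lf * lg).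
Proof. intros Hf Hg. exact (is_lim_mult f g x lf lg Hf Hg I). Qed.

Lemma is_lim_eq_val (f : R -> R) (x : Rbar) (l l' : R) :
  is_lim f x l -> l = l' -> is_lim f x l'.
Proof. now intros H ->. Qed.

Ltac is_lim_poly :=
  eapply is_lim_eq_val;
  [ repeat first [ eassumption | apply is_lim_id | apply is_lim_const
                 | apply is_lim_minus' | apply is_lim_plus' | apply is_lim_mult_R ]
  | ].

Lemma is_lim_seq_unique_R (u : nat -> R) (l1 l2 : R) :
  is_lim_seq u l1 -> is_lim_seq u l2 -> l1 = l2.
Proof.
  intros H1 H2. apply is_lim_seq_unique in H1, H2. rewrite H1 in H2. now injection H2.
Qed.

Lemma locally'_Rabs (x : R) (P : R -> Prop) : locally' x P ->
  exists d, 0 < d /\ forall y, 0 < Rabs (y - x) < d -> P y.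
Proof.
  intros [d Hd]. exists d. split; [apply cond_pos |].
  intros y [Hy0 Hy]. apply Hd; [exact Hy |].
  intros ->. rewrite Rminus_eq_0, Rabs_R0 in Hy0. lra.
Qed.

Lemma is_lim_pos_near (f : R -> R) (x l : R) : is_lim f x l -> 0 < l ->
  locally' x (fun y => 0 < f y).
Proof. intros Hf Hl. exact (Hf _ (open_gt 0 l Hl)). Qed.

Lemma is_lim_neg_near (f : R -> R) (x l : R) : is_lim f x l -> l < 0 ->
  locally' x (fun y => f y < 0).
Proof. intros Hf Hl. exact (Hf _ (open_lt 0 l Hl)). Qed.

Lemma is_lim_root_quotient (h : R -> R) (x m : R) :
  h x = 0 -> is_derive h x m -> is_lim (fun y => h y / (y - x)) x m.
Proof.
  intros Hx Hd. apply is_derive_Reals in Hd. apply is_lim_spec. intros eps.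
  destruct (Hd eps (cond_pos eps)) as [d Hdd]. exists d. intros y Hy Hne.
  change R in y.
  unfold ball in Hy; simpl in Hy; unfold AbsRing_ball, abs, minus, plus, opp in Hy; simpl in Hy.
  assert (Hk : y - x <> 0) by (intro; apply Hne; lra).
  specialize (Hdd (y - x) Hk). replace (x + (y - x)) with y in Hdd by ring.
  rewrite Hx, Rminus_0_r in Hdd. exact (Hdd Hy).
Qed.

Lemma le_center_of_derive_sign (f : R -> R) (x d : R) :
  (forall y, Rabs (y - x) < d -> ex_derive f y) ->
  (forall y, Rabs (y - x) < d -> Derive f y * (y - x) <= 0) ->
  forall y, Rabs (y - x) < d -> f y <= f x.
Proof.
  intros Hex Hsign y Hy.
  assert (Hball : forall z, Rmin x y <= z <= Rmax x y -> Rabs (z - x) < d).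
  { intros z Hz. apply Rabs_def2 in Hy. apply Rabs_def1;
      unfold Rmin, Rmax in Hz; destruct (Rle_dec x y); lra. }
  assert (Hder : forall z, Rmin x y <= z <= Rmax x y -> derivable_pt_lim f z (Derive f z)).
  { intros z Hz. apply is_derive_Reals, Derive_correct, Hex, Hball, Hz. }
  destruct (Rtotal_order y x) as [Hlt | [-> | Hgt]]; [| lra |].
  - destruct (MVT_cor2 f (Derive f) y x Hlt) as [z [Hz Hzxy]].
    { intros z Hz. apply Hder. rewrite Rmin_right, Rmax_left; lra. }
    assert (Hs := Hsign z (Hball z ltac:(rewrite Rmin_right, Rmax_left; lra))). nra.
  - destruct (MVT_cor2 f (Derive f) x y Hgt) as [z [Hz Hzxy]].
    { intros z Hz. apply Hder. rewrite Rmin_left, Rmax_right; lra. }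
    assert (Hs := Hsign z (Hball z ltac:(rewrite Rmin_left, Rmax_right; lra))). nra.
Qed.

Definition F_blowup (gamma mu r U : R) : R :=
  2 * r * ((U - 1) * r - (U ^ 2 - k1 gamma mu * U + mu)).

Definition G_blowup (gamma mu r U : R) : R :=
  r * (U + k2 gamma mu) - U * (U - mu).

Lemma k2_pos gamma mu : 1 < gamma -> mu < 1 -> 0 < k2 gamma mu.
Proof. intros Hg Hm. unfold k2. apply Rdiv_lt_0_compat; lra. Qed.

Lemma F_blowup_at_B gamma mu m :
  F_blowup gamma mu m 1 = m * ((gamma - 1) * (1 - mu)).
Proof. unfold F_blowup, k1. field. Qed.

Lemma G_blowup_at_B gamma mu m :
  G_blowup gamma mu m 1 = m * (1 + k2 gamma mu) - (1 - mu).
Proof. unfold G_blowup. ring. Qed.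

Lemma ode_blowup gamma mu r U d : U <> 1 ->
  (Gfun gamma mu ((U - 1) * r) U <> 0 /\
     d = Ffun gamma mu ((U - 1) * r) U / Gfun gamma mu ((U - 1) * r) U) <->
  (G_blowup gamma mu r U <> 0 /\ d = F_blowup gamma mu r U / G_blowup gamma mu r U).
Proof.
  intros HU. assert (HU' : U - 1 <> 0) by lra.
  replace (Gfun gamma mu ((U - 1) * r) U) with ((U - 1) * G_blowup gamma mu r U)
    by (unfold Gfun, G_blowup; ring).
  replace (Ffun gamma mu ((U - 1) * r) U) with ((U - 1) * F_blowup gamma mu r U)
    by (unfold Ffun, F_blowup; ring).
  split; intros [HG Hd]; split.
  - intros E. apply HG. rewrite E. ring.
  - rewrite Hd. field. split; [| exact HU']. intros E. apply HG. rewrite E. ring.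
  - now apply Rmult_integral_contrapositive.
  - rewrite Hd. field. now split.
Qed.

Lemma integral_curve_blowup gamma mu delta h U :
  integral_curve_through_B gamma mu delta h -> 0 < Rabs (U - 1) < delta ->
  G_blowup gamma mu (h U / (U - 1)) U <> 0 /\
  Derive h U = F_blowup gamma mu (h U / (U - 1)) U / G_blowup gamma mu (h U / (U - 1)) U.
Proof.
  intros (_ & _ & _ & Hode) HU.
  assert (HU1 : U <> 1) by (intros ->; rewrite Rminus_eq_0, Rabs_R0 in HU; lra).
  apply ode_blowup; [exact HU1 |].
  replace ((U - 1) * (h U / (U - 1))) with (h U) by (field; lra).
  now apply Hode.
Qed.

Lemma is_lim_integral_curve_quotient gamma mu delta h :
  integral_curve_through_B gamma mu delta h ->
  is_lim (fun y => h y / (y - 1)) 1 (Derive h 1).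
Proof.
  intros (Hd & H0 & Hex & _). apply is_lim_root_quotient; [exact H0 |].
  apply Derive_correct, Hex. rewrite Rminus_eq_0, Rabs_R0. exact Hd.
Qed.

Lemma mvt_points_seq (h : R -> R) (x d : R) : 0 < d ->
  (forall y, Rabs (y - x) < d -> ex_derive h y) ->
  exists V xi : nat -> R, is_lim_seq V x /\ is_lim_seq xi x /\
    (forall n, x < xi n < V n /\ V n < x + d) /\
    (forall n, h (V n) - h x = Derive h (xi n) * (V n - x)).
Proof.
  intros Hd Hex. set (V := fun n => x + d / 2 * (1 / 2) ^ n).
  assert (HV : forall n, x < V n < x + d).
  { intros n. assert (0 < (1 / 2) ^ n <= 1).
    { split; [apply pow_lt; lra |]. rewrite <- (pow1 n) at 2. apply pow_incr. lra. }
    unfold V. nra. }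
  assert (LV : is_lim_seq V x).
  { assert (Lgeom : is_lim_seq (fun n => (1 / 2) ^ n) 0)
      by (apply is_lim_seq_geom; rewrite Rabs_pos_eq; lra).
    assert (L := is_lim_seq_plus' _ _ _ _ (is_lim_seq_const x)
                   (is_lim_seq_mult' _ _ _ _ (is_lim_seq_const (d / 2)) Lgeom)).
    now rewrite Rmult_0_r, Rplus_0_r in L. }
  assert (Hmvt : forall n, exists z, x < z < V n /\ h (V n) - h x = Derive h z * (V n - x)).
  { intros n. destruct (MVT_cor2 h (Derive h) x (V n)) as [z [Hz Hzr]]; [apply HV | |].
    - intros z Hz. apply is_derive_Reals, Derive_correct, Hex.
      specialize (HV n). rewrite Rabs_pos_eq; lra.
    - exists z. split; assumption. }
  destruct (functional_choice _ Hmvt) as [xi Hxi].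
  exists V, xi. split; [exact LV |]. split; [| split].
  - apply (is_lim_seq_le_le (fun _ => x) xi V); [| apply is_lim_seq_const | exact LV].
    intros n. destruct (Hxi n) as [Hz _]. lra.
  - intros n. destruct (Hxi n) as [Hz _]. specialize (HV n). repeat split; lra.
  - intros n. apply Hxi.
Qed.

Lemma slope_at_B gamma mu delta h :
  integral_curve_through_B gamma mu delta h ->
  Derive h 1 * (Derive h 1 * (1 + k2 gamma mu) - (1 - mu))
  = Derive h 1 * ((gamma - 1) * (1 - mu)).
Proof.
  intros Hc. pose proof Hc as (Hd & H0 & Hex & _). set (m := Derive h 1).
  set (r := fun y => h y / (y - 1)).
  assert (Lr : is_lim r 1 m) by exact (is_lim_integral_curve_quotient _ _ _ _ Hc).
  assert (LF : is_lim (fun y => F_blowup gamma mu (r y) y) 1 (m * ((gamma - 1) * (1 - mu)))).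
  { rewrite <- F_blowup_at_B. unfold F_blowup. is_lim_poly. reflexivity. }
  assert (LG : is_lim (fun y => G_blowup gamma mu (r y) y) 1
                 (m * (1 + k2 gamma mu) - (1 - mu))).
  { rewrite <- G_blowup_at_B. unfold G_blowup. is_lim_poly. reflexivity. }
  destruct (mvt_points_seq h 1 delta Hd Hex) as (V & xi & LV & Lxi & Hord & Hmvt).
  assert (Hne : forall u : nat -> R, (forall n, 1 < u n) ->
                  eventually (fun n => Finite (u n) <> Finite 1)).
  { intros u Hu. exists O. intros n _ E. injection E. specialize (Hu n). lra. }
  assert (HV1 : forall n, 1 < V n) by (intros n; specialize (Hord n); lra).
  assert (Hxi1 : forall n, 1 < xi n) by (intros n; apply Hord).
  assert (Hpt : forall n, r (V n) * G_blowup gamma mu (r (xi n)) (xi n)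
                          = F_blowup gamma mu (r (xi n)) (xi n)).
  { intros n. specialize (Hord n). specialize (Hmvt n).
    destruct (integral_curve_blowup _ _ _ _ (xi n) Hc) as [HG Hder];
      [rewrite Rabs_pos_eq; lra |].
    unfold r. rewrite H0, Rminus_0_r in Hmvt.
    replace (h (V n) / (V n - 1)) with (Derive h (xi n)) by (rewrite Hmvt; field; lra).
    rewrite Hder. field. exact HG. }
  apply (is_lim_seq_unique_R (fun n => r (V n) * G_blowup gamma mu (r (xi n)) (xi n))).
  - apply is_lim_seq_mult'.
    + exact (is_lim_comp_seq r V 1 m Lr (Hne V HV1) LV).
    + exact (is_lim_comp_seq _ xi 1 _ LG (Hne xi Hxi1) Lxi).
  - apply (is_lim_seq_ext _ _ _ (fun n => eq_sym (Hpt n))).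
    exact (is_lim_comp_seq _ xi 1 _ LF (Hne xi Hxi1) Lxi).
Qed.

Lemma slope_cases gamma mu delta h : 1 < gamma -> mu < 1 ->
  integral_curve_through_B gamma mu delta h ->
  Derive h 1 = 0 \/ Derive h 1 = gamma * (1 - mu) / (1 + k2 gamma mu).
Proof.
  intros Hg Hm Hc. pose proof (slope_at_B gamma mu delta h Hc) as E.
  pose proof (k2_pos gamma mu Hg Hm).
  destruct (Req_dec (Derive h 1) 0) as [E0 | E0]; [now left | right].
  apply Rmult_eq_reg_l in E; [| exact E0].
  apply (Rmult_eq_reg_r (1 + k2 gamma mu)); [| lra].
  field_simplify; lra.
Qed.

Definition blowup_divdiff_num (gamma mu r1 r2 U : R) : R :=
  2 * ((U - 1) * (U + k2 gamma mu) * r1 * r2 - (U - 1) * U * (U - mu) * (r1 + r2)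
       + (U ^ 2 - k1 gamma mu * U + mu) * U * (U - mu)).

Lemma blowup_field_sub gamma mu r1 r2 U :
  G_blowup gamma mu r1 U <> 0 -> G_blowup gamma mu r2 U <> 0 ->
  F_blowup gamma mu r1 U / G_blowup gamma mu r1 U - F_blowup gamma mu r2 U / G_blowup gamma mu r2 U
  = (r1 - r2) * blowup_divdiff_num gamma mu r1 r2 U
    / (G_blowup gamma mu r1 U * G_blowup gamma mu r2 U).
Proof.
  intros H1 H2. unfold F_blowup, blowup_divdiff_num.
  field_simplify; [| now split ..]. unfold G_blowup. field. split; [exact H2 | exact H1].
Qed.

Lemma blowup_divdiff_num_at_B gamma mu m1 m2 :
  blowup_divdiff_num gamma mu m1 m2 1 = - ((gamma - 1) * (1 - mu) * (1 - mu)).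
Proof. unfold blowup_divdiff_num, k1. field. Qed.

Lemma slope_nondegenerate gamma mu m : 1 < gamma -> mu < 1 ->
  m = 0 \/ m = gamma * (1 - mu) / (1 + k2 gamma mu) ->
  m * (1 + k2 gamma mu) - (1 - mu) <> 0.
Proof.
  intros Hg Hm [-> | ->]; [lra |]. pose proof (k2_pos gamma mu Hg Hm).
  replace (gamma * (1 - mu) / (1 + k2 gamma mu) * (1 + k2 gamma mu) - (1 - mu))
    with ((gamma - 1) * (1 - mu)) by (field; lra).
  apply Rgt_not_eq, Rmult_lt_0_compat; lra.
Qed.

Lemma sq_dist_derive_sign gamma mu delta1 h1 delta2 h2 y :
  integral_curve_through_B gamma mu delta1 h1 ->
  integral_curve_through_B gamma mu delta2 h2 ->
  0 < Rabs (y - 1) < delta1 -> 0 < Rabs (y - 1) < delta2 ->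
  blowup_divdiff_num gamma mu (h1 y / (y - 1)) (h2 y / (y - 1)) y < 0 ->
  0 < G_blowup gamma mu (h1 y / (y - 1)) y * G_blowup gamma mu (h2 y / (y - 1)) y ->
  2 * (h1 y - h2 y) * (Derive h1 y - Derive h2 y) * (y - 1) <= 0.
Proof.
  intros C1 C2 Hy1 Hy2 HQ HG.
  assert (Hy : y - 1 <> 0) by (intros E; rewrite E, Rabs_R0 in Hy1; lra).
  destruct (integral_curve_blowup _ _ _ _ y C1 Hy1) as [G1 ->].
  destruct (integral_curve_blowup _ _ _ _ y C2 Hy2) as [G2 ->].
  rewrite blowup_field_sub by assumption.
  set (Q := blowup_divdiff_num _ _ _ _ _) in *.
  set (P := G_blowup gamma mu (h1 y / (y - 1)) y * G_blowup gamma mu (h2 y / (y - 1)) y) in *.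
  replace (2 * (h1 y - h2 y) * ((h1 y / (y - 1) - h2 y / (y - 1)) * Q / P) * (y - 1))
    with (2 * (h1 y - h2 y) ^ 2 * (Q / P)) by (field; lra).
  assert (Q / P < 0) by (apply Rdiv_neg_pos; assumption).
  assert (0 <= (h1 y - h2 y) ^ 2) by apply pow2_ge_0.
  nra.
Qed.

Lemma integral_curve_unique gamma mu delta1 h1 delta2 h2 :
  1 < gamma -> mu < 1 ->
  integral_curve_through_B gamma mu delta1 h1 ->
  integral_curve_through_B gamma mu delta2 h2 ->
  Derive h1 1 = Derive h2 1 ->
  Derive h1 1 * (1 + k2 gamma mu) - (1 - mu) <> 0 ->
  exists eps, 0 < eps /\ forall U, Rabs (U - 1) < eps -> h1 U = h2 U.
Proof.
  intros Hg Hm C1 C2 Hslope Hnd.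
  pose proof C1 as (Hd1 & H10 & Hex1 & _). pose proof C2 as (Hd2 & H20 & Hex2 & _).
  set (m := Derive h1 1) in *.
  set (r1 := fun y => h1 y / (y - 1)). set (r2 := fun y => h2 y / (y - 1)).
  assert (L1 : is_lim r1 1 m) by exact (is_lim_integral_curve_quotient _ _ _ _ C1).
  assert (L2 : is_lim r2 1 m)
    by (rewrite Hslope; exact (is_lim_integral_curve_quotient _ _ _ _ C2)).
  assert (LQ : is_lim (fun y => blowup_divdiff_num gamma mu (r1 y) (r2 y) y) 1
                 (- ((gamma - 1) * (1 - mu) * (1 - mu)))).
  { rewrite <- (blowup_divdiff_num_at_B gamma mu m m).
    unfold blowup_divdiff_num. is_lim_poly. reflexivity. }
  assert (LG : is_lim (fun y => G_blowup gamma mu (r1 y) y * G_blowup gamma mu (r2 y) y) 1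
                 ((m * (1 + k2 gamma mu) - (1 - mu)) ^ 2)).
  { rewrite <- G_blowup_at_B. unfold G_blowup. is_lim_poly. ring. }
  assert (Hac : - ((gamma - 1) * (1 - mu) * (1 - mu)) < 0)
    by (apply Ropp_lt_gt_0_contravar; repeat apply Rmult_lt_0_compat; lra).
  assert (Hsq : 0 < (m * (1 + k2 gamma mu) - (1 - mu)) ^ 2) by (apply pow2_gt_0; exact Hnd).
  destruct (locally'_Rabs _ _ (filter_and _ _
              (is_lim_neg_near _ _ _ LQ Hac) (is_lim_pos_near _ _ _ LG Hsq)))
    as [e [He Hsign]].
  set (eps := Rmin e (Rmin delta1 delta2)).
  assert (Heps : 0 < eps) by (repeat apply Rmin_pos; assumption).
  assert (He1 : eps <= e) by apply Rmin_l.
  assert (He2 : eps <= delta1 /\ eps <= delta2)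
    by (split; eapply Rle_trans; [apply Rmin_r | apply Rmin_l | apply Rmin_r | apply Rmin_r]).
  set (D := fun y => (h1 y - h2 y) ^ 2).
  assert (HD : forall y, Rabs (y - 1) < eps ->
                 is_derive D y (2 * (h1 y - h2 y) * (Derive h1 y - Derive h2 y))).
  { intros y Hy. unfold D.
    assert (E1 : ex_derive h1 y) by (apply Hex1; lra).
    assert (E2 : ex_derive h2 y) by (apply Hex2; lra).
    auto_derive; [repeat split; assumption |].
    change (fun x => h1 x) with h1; change (fun x => h2 x) with h2. ring. }
  exists eps. split; [exact Heps |]. intros U HU.
  enough (D U <= D 1) by (unfold D in *; rewrite H10, H20 in *; nra).
  apply (le_center_of_derive_sign D 1 eps); [| | exact HU].
  - intros y Hy. eexists. now apply HD.
  - intros y Hy. rewrite (is_derive_unique _ _ _ (HD y Hy)).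
    destruct (Req_dec y 1) as [-> | Hy1]; [rewrite Rminus_eq_0; lra |].
    assert (Hy0 : 0 < Rabs (y - 1)) by (apply Rabs_pos_lt; lra).
    destruct (Hsign y ltac:(lra)) as [HQ HG].
    apply (sq_dist_derive_sign gamma mu delta1 h1 delta2 h2 y C1 C2);
      [lra | lra | exact HQ | exact HG].
Qed.

Section StrongRecursion.

Variables (x0 : R) (step : (nat -> R) -> nat -> R).

(* [strong_rec_table n i] is the [i]-th term for [i <= n] and junk beyond. *)
Fixpoint strong_rec_table (n : nat) : nat -> R :=
  match n with
  | O => fun _ => x0
  | S k => fun i => if (i <=? k)%nat then strong_rec_table k i else step (strong_rec_table k) k
  end.

Definition strong_rec (n : nat) : R := strong_rec_table n n.

Lemma strong_rec_table_le n i : (i <= n)%nat -> strong_rec_table n i = strong_rec i.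
Proof.
  induction n as [|n IH]; intros Hi.
  - now replace i with O by lia.
  - destruct (Nat.eq_dec i (S n)) as [-> | Hne]; [reflexivity |].
    simpl. rewrite (proj2 (Nat.leb_le i n)) by lia. apply IH. lia.
Qed.

Hypothesis step_local :
  forall f g n, (forall i, (i <= n)%nat -> f i = g i) -> step f n = step g n.

Lemma strong_rec_S n : strong_rec (S n) = step strong_rec n.
Proof.
  unfold strong_rec at 1. cbn [strong_rec_table]. rewrite (proj2 (Nat.leb_gt (S n) n)) by lia.
  apply step_local. intros i Hi. now apply strong_rec_table_le.
Qed.

End StrongRecursion.

Definition PS_derive_incr (u : nat -> R) : nat -> R := PS_derive (PS_incr_1 u).

Lemma PS_derive_incr_E u n : PS_derive_incr u n = INR (S n) * u n.
Proof. reflexivity. Qed.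

Lemma PS_incr_1_derive_incr u n : PS_incr_1 (PS_derive_incr u) n = INR n * PS_incr_1 u n.
Proof. destruct n; simpl; [change (zero : R) with 0; ring | reflexivity]. Qed.

Lemma CV_radius_derive_incr u : CV_radius (PS_derive_incr u) = CV_radius u.
Proof. unfold PS_derive_incr. now rewrite CV_radius_derive, CV_radius_incr_1. Qed.

Definition inner_conv (f g : nat -> R) (n : nat) : R :=
  sum_n_m (fun i => f i * g (n - i)%nat) 1 (pred n).

Lemma PS_mult_split_ends f g n :
  PS_mult f g (S n) = f O * g (S n) + inner_conv f g (S n) + f (S n) * g O.
Proof.
  unfold PS_mult, inner_conv. rewrite <- sum_n_Reals. unfold sum_n.
  rewrite sum_n_Sm, sum_Sn_m by lia. rewrite Nat.sub_0_r, Nat.sub_diag. reflexivity.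
Qed.

Lemma sum_n_m_le_loc (u v : nat -> R) n m :
  (forall k, (n <= k <= m)%nat -> u k <= v k) -> sum_n_m u n m <= sum_n_m v n m.
Proof.
  intros Huv. rewrite (sum_n_m_ext_loc u (fun k => Rmin (u k) (v k)))
    by (intros k Hk; symmetry; apply Rmin_left, Huv, Hk).
  apply sum_n_m_le. intros k. apply Rmin_r.
Qed.

Lemma inner_conv_abs_le (f g F G : nat -> R) n :
  (forall i, (1 <= i < n)%nat -> Rabs (f i) <= F i) ->
  (forall i, (1 <= i < n)%nat -> Rabs (g i) <= G i) ->
  Rabs (inner_conv f g n) <= inner_conv F G n.
Proof.
  intros Hf Hg. unfold inner_conv.
  eapply Rle_trans; [apply (norm_sum_n_m (K := R_AbsRing) (V := R_NormedModule)) |].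
  apply sum_n_m_le_loc. intros i Hi. change (norm ?x) with (Rabs x). rewrite Rabs_mult.
  apply Rmult_le_compat; try apply Rabs_pos; [apply Hf | apply Hg]; lia.
Qed.

Lemma inner_conv_le_PS_mult (F G : nat -> R) n :
  (forall i, 0 <= F i) -> (forall i, 0 <= G i) -> inner_conv F G n <= PS_mult F G n.
Proof.
  intros HF HG. destruct n as [|n].
  - unfold inner_conv. rewrite sum_n_m_zero by lia. unfold PS_mult. simpl.
    change (zero : R) with 0. apply Rmult_le_pos; auto.
  - rewrite PS_mult_split_ends.
    assert (0 <= F O * G (S n)) by (apply Rmult_le_pos; auto).
    assert (0 <= F (S n) * G O) by (apply Rmult_le_pos; auto).
    lra.
Qed.

Lemma sum_f_R0_rev (f : nat -> R) n : sum_f_R0 (fun i => f (n - i)%nat) n = sum_f_R0 f n.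
Proof.
  induction n as [|n IH]; [reflexivity |].
  rewrite decomp_sum by lia. simpl pred. rewrite tech5, Nat.sub_0_r.
  rewrite <- IH. simpl. ring.
Qed.

Lemma sum_inv_sq_le n : sum_f_R0 (fun i => / (INR i + 1) ^ 2) n <= 2 - / (INR n + 1).
Proof.
  induction n as [|n IH]; [simpl; lra |].
  rewrite tech5, S_INR. pose proof (pos_INR n).
  assert (/ (INR n + 1 + 1) ^ 2 <= / (INR n + 1) - / (INR n + 1 + 1)); [| lra].
  replace (/ (INR n + 1) - / (INR n + 1 + 1)) with (/ ((INR n + 1) * (INR n + 1 + 1)))
    by (field; lra).
  apply Rinv_le_contravar; [apply Rmult_lt_0_compat |]; nra.
Qed.

Lemma inv_sq_mul_le (p q : R) : 0 < p -> 0 < q ->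
  / (p ^ 2 * q ^ 2) <= 2 / (p + q) ^ 2 * (/ p ^ 2 + / q ^ 2).
Proof.
  intros Hp Hq.
  replace (2 / (p + q) ^ 2 * (/ p ^ 2 + / q ^ 2))
    with (2 * (p ^ 2 + q ^ 2) * / ((p + q) ^ 2 * (p ^ 2 * q ^ 2))) by (field; lra).
  replace (/ (p ^ 2 * q ^ 2)) with ((p + q) ^ 2 * / ((p + q) ^ 2 * (p ^ 2 * q ^ 2)))
    by (field; lra).
  apply Rmult_le_compat_r; [| pose proof (pow2_ge_0 (p - q)); nra].
  apply Rlt_le, Rinv_0_lt_compat.
  apply Rmult_lt_0_compat; [| apply Rmult_lt_0_compat]; apply pow_lt; lra.
Qed.

Lemma sum_inv_sq_conv_le n :
  sum_f_R0 (fun i => / ((INR i + 1) ^ 2 * (INR (n - i) + 1) ^ 2)) n <= 8 / (INR n + 2) ^ 2.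
Proof.
  set (C := 2 / (INR n + 2) ^ 2). pose proof (pos_INR n).
  assert (HC : 0 < C) by (apply Rdiv_lt_0_compat; [lra | apply pow_lt; lra]).
  apply Rle_trans with
    (C * (sum_f_R0 (fun i => / (INR i + 1) ^ 2) n
          + sum_f_R0 (fun i => / (INR (n - i) + 1) ^ 2) n)).
  - rewrite <- plus_sum, scal_sum. apply sum_Rle. intros i Hi.
    rewrite (Rmult_comm _ C). unfold C.
    replace (INR n + 2) with ((INR i + 1) + (INR (n - i) + 1))
      by (rewrite minus_INR by lia; ring).
    apply inv_sq_mul_le; pose proof (pos_INR i); pose proof (pos_INR (n - i)); lra.
  - rewrite (sum_f_R0_rev (fun i => / (INR i + 1) ^ 2)).
    pose proof (sum_inv_sq_le n).
    assert (0 < / (INR n + 1)) by (apply Rinv_0_lt_compat; lra).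
    replace (8 / (INR n + 2) ^ 2) with (C * 4) by (unfold C; field; lra).
    apply Rmult_le_compat_l; lra.
Qed.

Definition power_majorant (A M : R) (j : nat) : R := A * M ^ j / (INR j + 1) ^ 2.

Lemma power_majorant_nonneg A M j : 0 <= A -> 0 < M -> 0 <= power_majorant A M j.
Proof.
  intros HA HM. unfold power_majorant. pose proof (pos_INR j).
  apply Rmult_le_pos; [apply Rmult_le_pos; [exact HA | apply pow_le; lra] |].
  apply Rlt_le, Rinv_0_lt_compat, pow_lt. lra.
Qed.

Lemma PS_mult_power_majorant A M n : 0 <= A -> 0 < M ->
  PS_mult (power_majorant A M) (power_majorant A M) n <= 8 * A ^ 2 * M ^ n / (INR n + 2) ^ 2.
Proof.
  intros HA HM. unfold PS_mult, power_majorant.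
  replace (sum_f_R0 _ n)
    with (A ^ 2 * M ^ n * sum_f_R0 (fun i => / ((INR i + 1) ^ 2 * (INR (n - i) + 1) ^ 2)) n).
  - replace (8 * A ^ 2 * M ^ n / (INR n + 2) ^ 2) with (A ^ 2 * M ^ n * (8 / (INR n + 2) ^ 2))
      by (unfold Rdiv; ring).
    apply Rmult_le_compat_l; [apply Rmult_le_pos; apply pow_le; lra |].
    apply sum_inv_sq_conv_le.
  - rewrite scal_sum. apply sum_eq. intros i Hi.
    replace (M ^ n) with (M ^ i * M ^ (n - i)) by (rewrite <- pow_add; f_equal; lia).
    pose proof (pos_INR i). pose proof (pos_INR (n - i)). field. lra.
Qed.

Lemma inner_conv_power_majorant (f g : nat -> R) (A M K : R) n :
  0 <= A -> 0 < M -> 0 <= K ->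
  (forall i, (1 <= i < n)%nat -> Rabs (f i) <= K * power_majorant A M i) ->
  (forall i, (1 <= i < n)%nat -> Rabs (g i) <= power_majorant A M i) ->
  Rabs (inner_conv f g n) <= K * (8 * A ^ 2 * M ^ n / (INR n + 2) ^ 2).
Proof.
  intros HA HM HK Hf Hg.
  eapply Rle_trans; [apply (inner_conv_abs_le _ _ _ _ n Hf Hg) |].
  eapply Rle_trans; [apply inner_conv_le_PS_mult; intros i;
    [apply Rmult_le_pos; [exact HK |] |]; apply power_majorant_nonneg; assumption |].
  replace (PS_mult (fun i => K * power_majorant A M i) (power_majorant A M) n)
    with (K * PS_mult (power_majorant A M) (power_majorant A M) n)
    by (unfold PS_mult; rewrite scal_sum; apply sum_eq; intros; ring).
  apply Rmult_le_compat_l; [exact HK |]. now apply PS_mult_power_majorant.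
Qed.

Lemma CV_radius_power_majorant (u : nat -> R) (A M : R) : 0 <= A -> 1 <= M ->
  (forall j, (1 <= j)%nat -> Rabs (u j) <= power_majorant A M j) ->
  Rbar_le (/ M) (CV_radius u).
Proof.
  intros HA HM Hu. apply (proj1 (CV_radius_bounded u)). exists (Rabs (u O) + A). intros n.
  rewrite Rabs_mult, (Rabs_pos_eq ((/ M) ^ n)) by (apply pow_le, Rlt_le, Rinv_0_lt_compat; lra).
  destruct n as [|n]; [simpl; lra |].
  pose proof (Rabs_pos (u O)).
  assert (Hp : 0 < (/ M) ^ S n) by (apply pow_lt, Rinv_0_lt_compat; lra).
  eapply Rle_trans; [apply Rmult_le_compat_r; [lra | apply Hu; lia] |].
  unfold power_majorant. rewrite pow_inv. pose proof (pos_INR (S n)).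
  assert (0 < M ^ S n) by (apply pow_lt; lra).
  replace (A * M ^ S n / (INR (S n) + 1) ^ 2 * / M ^ S n) with (A * / (INR (S n) + 1) ^ 2)
    by (field; lra).
  assert (/ (INR (S n) + 1) ^ 2 <= 1) by (rewrite <- Rinv_1; apply Rinv_le_contravar; nra).
  nra.
Qed.

Lemma linear_coef_term_bound (beta kap c t A P un : R) :
  0 < c -> 2 <= t -> 0 <= A * P -> Rabs un <= A * P / (t + 1) ^ 2 ->
  Rabs ((4 * beta - (t + 2) * beta + (1 + c) * (t + 1) - 2 * kap) * un)
  <= (6 * Rabs beta + 2 * (1 + c) + 2 * Rabs kap) * (A * P / (t + 2)).
Proof.
  intros Hc Ht HAP Hun. set (s := A * P / (t + 2)). set (rho := (t + 2) / (t + 1) ^ 2).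
  assert (Hs : 0 <= s) by (apply Rdiv_le_0_compat; lra).
  assert (Ht1 : 0 < (t + 1) ^ 2) by (apply pow_lt; lra).
  assert (Hus : Rabs un <= s * rho) by (replace (s * rho) with (A * P / (t + 1) ^ 2)
                                          by (unfold s, rho; field; lra); exact Hun).
  assert (Hr0 : 0 <= rho) by (apply Rlt_le, Rdiv_lt_0_compat; lra).
  assert (Hr1 : (t + 6) * rho <= 6).
  { unfold rho. replace ((t + 6) * ((t + 2) / (t + 1) ^ 2)) with ((t + 6) * (t + 2) / (t + 1) ^ 2)
      by (field; lra).
    apply Rle_div_l; [lra | nra]. }
  assert (Hr2 : (t + 1) * rho <= 2).
  { unfold rho. replace ((t + 1) * ((t + 2) / (t + 1) ^ 2)) with ((t + 2) / (t + 1))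
      by (field; lra).
    apply Rle_div_l; lra. }
  assert (Hr3 : rho <= 1) by (apply (Rdiv_le_1 (t + 2) _ Ht1); nra).
  assert (Hco : Rabs (4 * beta - (t + 2) * beta + (1 + c) * (t + 1) - 2 * kap)
                <= (t + 6) * Rabs beta + (1 + c) * (t + 1) + 2 * Rabs kap).
  { unfold Rminus. eapply Rle_trans; [apply Rabs_triang |].
    rewrite Rabs_Ropp, (Rabs_mult 2), (Rabs_pos_eq 2) by lra.
    eapply Rle_trans; [apply Rplus_le_compat_r, Rabs_triang |].
    rewrite (Rabs_pos_eq ((1 + c) * (t + 1))) by nra.
    eapply Rle_trans; [apply Rplus_le_compat_r, Rplus_le_compat_r, Rabs_triang |].
    rewrite Rabs_Ropp, !Rabs_mult, (Rabs_pos_eq 4), (Rabs_pos_eq (t + 2)) by lra. lra. }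
  rewrite Rabs_mult.
  apply Rle_trans with (((t + 6) * Rabs beta + (1 + c) * (t + 1) + 2 * Rabs kap) * (s * rho)).
  - apply Rmult_le_compat; try apply Rabs_pos; assumption.
  - pose proof (Rabs_pos beta). pose proof (Rabs_pos kap).
    replace (((t + 6) * Rabs beta + (1 + c) * (t + 1) + 2 * Rabs kap) * (s * rho))
      with (s * (Rabs beta * ((t + 6) * rho) + (1 + c) * ((t + 1) * rho) + 2 * Rabs kap * rho))
      by ring.
    rewrite (Rmult_comm _ s). apply Rmult_le_compat_l; [exact Hs | nra].
Qed.

Lemma top_conv_term_bound (a b A M t P I2 : R) :
  0 < a -> 0 < b -> A = a / (16 * b) -> 0 < M -> 2 <= t -> 0 < P ->
  Rabs I2 <= (t + 1) * (8 * A ^ 2 * (M * P) / (t + 3) ^ 2) ->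
  Rabs (b * I2) <= a / 2 * M * (A * P / (t + 2)).
Proof.
  intros Ha Hb HA HM Ht HP HI2. set (s := A * P / (t + 2)).
  assert (HA0 : 0 < A) by (rewrite HA; apply Rdiv_lt_0_compat; lra).
  assert (Hs : 0 <= s) by (apply Rdiv_le_0_compat; [apply Rmult_le_pos |]; lra).
  rewrite Rabs_mult, (Rabs_pos_eq b) by lra.
  replace ((t + 1) * (8 * A ^ 2 * (M * P) / (t + 3) ^ 2))
    with (a / 2 * M * s / b * ((t + 1) * (t + 2) / (t + 3) ^ 2)) in HI2
    by (unfold s; rewrite HA; field; lra).
  assert ((t + 1) * (t + 2) / (t + 3) ^ 2 <= 1)
    by (apply (Rdiv_le_1 ((t + 1) * (t + 2))); [apply pow_lt |]; nra).
  assert (0 <= a / 2 * M * s) by (apply Rmult_le_pos; [apply Rmult_le_pos |]; lra).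
  apply Rle_trans with (b * (a / 2 * M * s / b * ((t + 1) * (t + 2) / (t + 3) ^ 2))).
  - apply Rmult_le_compat_l; lra.
  - replace (b * (a / 2 * M * s / b * ((t + 1) * (t + 2) / (t + 3) ^ 2)))
      with (a / 2 * M * s * ((t + 1) * (t + 2) / (t + 3) ^ 2)) by (field; lra).
    nra.
Qed.

Lemma lagged_term_bound (A M t P um : R) :
  0 < A -> 1 <= M -> 2 <= t -> 0 < P -> Rabs um <= A * (P / M) / t ^ 2 ->
  Rabs ((t - 2) * um) <= A * P / (t + 2).
Proof.
  intros HA HM Ht HP Hum. set (s := A * P / (t + 2)).
  assert (Hs : 0 <= s) by (apply Rdiv_le_0_compat; [apply Rmult_le_pos |]; lra).
  rewrite Rabs_mult, (Rabs_pos_eq (t - 2)) by lra.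
  replace (A * (P / M) / t ^ 2) with (s * ((t + 2) / (M * t ^ 2))) in Hum
    by (unfold s; field; lra).
  assert ((t - 2) * ((t + 2) / (M * t ^ 2)) <= 1).
  { replace ((t - 2) * ((t + 2) / (M * t ^ 2))) with ((t - 2) * (t + 2) / (M * t ^ 2))
      by (field; lra).
    apply (Rdiv_le_1 ((t - 2) * (t + 2))); nra. }
  assert (0 <= t - 2) by lra. nra.
Qed.

(* The recursion for the coefficient of index n + 1, with t = n, P = M ^ n and the
   convolutions split into their end terms (involving beta) and inner sums I0, I1, I2.
   A = a / (16 b) absorbs b I2, the only term of order M ^ (n + 1); M absorbs the others. *)
Lemma majorant_step_bound (a b c beta kap A M t P I0 I1 I2 un um : R) :
  0 < a -> 0 < b -> 0 < c -> A = a / (16 * b) -> 1 <= M ->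
  24 * A + 6 * Rabs beta + 2 * (1 + c) + 2 * Rabs kap + 1 <= a / 2 * M ->
  2 <= t -> 0 < P ->
  Rabs I0 <= 8 * A ^ 2 * P / (t + 2) ^ 2 ->
  Rabs I1 <= (t + 1) * (8 * A ^ 2 * P / (t + 2) ^ 2) ->
  Rabs I2 <= (t + 1) * (8 * A ^ 2 * (M * P) / (t + 3) ^ 2) ->
  Rabs un <= A * P / (t + 1) ^ 2 ->
  Rabs um <= A * (P / M) / t ^ 2 ->
  Rabs ((2 * (2 * beta * un + I0) - ((t + 2) * beta * un + I1) - b * I2
         + ((1 + c) * (t + 1) - 2 * kap) * un + (t - 2) * um) / (a * (t + 2) + c))
  <= A * (M * P) / (t + 2) ^ 2.
Proof.
  intros Ha Hb Hc HA HM HK Ht HP HI0 HI1 HI2 Hun Hum.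
  assert (HA0 : 0 < A) by (rewrite HA; apply Rdiv_lt_0_compat; lra).
  set (s := A * P / (t + 2)).
  assert (HAs : 0 <= A * s)
    by (apply Rmult_le_pos; [lra | apply Rdiv_le_0_compat; [apply Rmult_le_pos |]; lra]).
  assert (B0 : Rabs (2 * I0) <= 4 * A * s).
  { rewrite Rabs_mult, Rabs_pos_eq by lra.
    replace (8 * A ^ 2 * P / (t + 2) ^ 2) with (A * s * (8 / (t + 2))) in HI0
      by (unfold s; field; lra).
    assert (8 / (t + 2) <= 2) by (apply Rle_div_l; lra). nra. }
  assert (B1 : Rabs I1 <= 8 * A * s).
  { replace ((t + 1) * (8 * A ^ 2 * P / (t + 2) ^ 2)) with (8 * A * s * ((t + 1) / (t + 2)))
      in HI1 by (unfold s; field; lra).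
    assert ((t + 1) / (t + 2) <= 1) by (apply (Rdiv_le_1 (t + 1)); lra). nra. }
  pose proof (top_conv_term_bound a b A M t P I2 Ha Hb HA ltac:(lra) Ht HP HI2) as B2.
  pose proof (linear_coef_term_bound beta kap c t A P un Hc Ht ltac:(nra) Hun) as B3.
  pose proof (lagged_term_bound A M t P um HA0 HM Ht HP Hum) as B4.
  fold s in B2, B3, B4.
  set (co := 4 * beta - (t + 2) * beta + (1 + c) * (t + 1) - 2 * kap) in B3.
  assert (HL : 0 < a * (t + 2)) by nra.
  rewrite Rabs_div, (Rabs_pos_eq (a * (t + 2) + c)) by lra.
  apply Rle_trans with (a * M * s / (a * (t + 2))).
  2:{ right. unfold s. field. lra. }
  apply Rle_trans with (Rabs (2 * (2 * beta * un + I0) - ((t + 2) * beta * un + I1) - b * I2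
                              + ((1 + c) * (t + 1) - 2 * kap) * un + (t - 2) * um)
                        / (a * (t + 2))).
  { apply Rmult_le_compat_l; [apply Rabs_pos | apply Rinv_le_contravar; lra]. }
  apply Rmult_le_compat_r; [apply Rlt_le, Rinv_0_lt_compat; exact HL |].
  replace (2 * (2 * beta * un + I0) - ((t + 2) * beta * un + I1) - b * I2
           + ((1 + c) * (t + 1) - 2 * kap) * un + (t - 2) * um)
    with (2 * I0 + - I1 + - (b * I2) + co * un + (t - 2) * um) by (unfold co; ring).
  pose proof (Rabs_triang (2 * I0) (- I1)).
  pose proof (Rabs_triang (2 * I0 + - I1) (- (b * I2))).
  pose proof (Rabs_triang (2 * I0 + - I1 + - (b * I2)) (co * un)).
  pose proof (Rabs_triang (2 * I0 + - I1 + - (b * I2) + co * un) ((t - 2) * um)).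
  rewrite !Rabs_Ropp in *.
  assert ((24 * A + 6 * Rabs beta + 2 * (1 + c) + 2 * Rabs kap + 1) * s <= a / 2 * M * s)
    by (apply Rmult_le_compat_r; [apply Rdiv_le_0_compat; [apply Rmult_le_pos |] |]; lra).
  nra.
Qed.

Section SeriesSolution.

Variables a b c kap beta : R.
Hypotheses (Ha : 0 < a) (Hb : 0 < b) (Hc : 0 < c) (Hbeta : b * beta = a + c).

(* Coefficients of W (w (x + b) - (c + (1 + c) x + x^2)) - 2 w (x w - (x^2 + kap x - a/2)),
   where w = sum u_n x^n and W = (x w)'. For x = U - 1 and H = x w it is (G dH/dU - F) / x. *)
Definition ode_residual (u : nat -> R) (n : nat) : R :=
  PS_incr_1 (PS_mult (PS_derive_incr u) u) n + b * PS_mult (PS_derive_incr u) u n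
  - c * PS_derive_incr u n - (1 + c) * PS_incr_1 (PS_derive_incr u) n
  - PS_incr_1 (PS_incr_1 (PS_derive_incr u)) n
  - 2 * PS_incr_1 (PS_mult u u) n + 2 * PS_incr_1 (PS_incr_1 u) n
  + 2 * kap * PS_incr_1 u n - a * u n.

(* [ode_residual u (S n) = 0] solved for [u (S n)], whose coefficient
   [b beta (n + 3) - c (n + 2) - a] equals [a (n + 2) + c] when [b beta = a + c]. *)
Definition coef_step (u : nat -> R) (n : nat) : R :=
  (2 * PS_mult u u n - PS_mult (PS_derive_incr u) u n
   - b * inner_conv (PS_derive_incr u) u (S n)
   + ((1 + c) * INR (S n) - 2 * kap) * u n + (INR n - 2) * PS_incr_1 u n)
  / (a * (INR n + 2) + c).

Definition coef : nat -> R := strong_rec beta coef_step.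

Lemma coef_step_local f g n :
  (forall i, (i <= n)%nat -> f i = g i) -> coef_step f n = coef_step g n.
Proof.
  intros Hfg. unfold coef_step, PS_mult, inner_conv.
  rewrite (sum_eq (fun k => f k * f (n - k)%nat) (fun k => g k * g (n - k)%nat))
    by (intros i Hi; rewrite !Hfg by lia; reflexivity).
  rewrite (sum_eq (fun k => PS_derive_incr f k * f (n - k)%nat)
                  (fun k => PS_derive_incr g k * g (n - k)%nat))
    by (intros i Hi; rewrite !PS_derive_incr_E, !Hfg by lia; reflexivity).
  rewrite (sum_n_m_ext_loc (fun i => PS_derive_incr f i * f (S n - i)%nat)
                           (fun i => PS_derive_incr g i * g (S n - i)%nat))
    by (intros i Hi; simpl in Hi; rewrite !PS_derive_incr_E, !Hfg by lia; reflexivity).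
  rewrite Hfg by lia. destruct n; [reflexivity |]. simpl. rewrite Hfg by lia. reflexivity.
Qed.

Lemma coef_0 : coef O = beta.
Proof. reflexivity. Qed.

Lemma coef_S n : coef (S n) = coef_step coef n.
Proof. apply strong_rec_S, coef_step_local. Qed.

Lemma ode_residual_coef n : ode_residual coef n = 0.
Proof.
  destruct n as [|n].
  - unfold ode_residual, PS_mult. rewrite PS_derive_incr_E. cbn [PS_incr_1 sum_f_R0].
    change (zero : R) with 0. rewrite PS_derive_incr_E. cbn [Nat.sub]. rewrite coef_0.
    simpl INR. replace (b * (1 * beta * beta)) with ((a + c) * beta) by (rewrite <- Hbeta; ring).
    ring.
  - unfold ode_residual. simpl PS_incr_1. rewrite PS_incr_1_derive_incr.
    rewrite PS_mult_split_ends, !PS_derive_incr_E, coef_0.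
    assert (HL : 0 < a * (INR n + 2) + c) by (pose proof (pos_INR n); nra).
    assert (HX : coef (S n) * (a * (INR n + 2) + c) = coef_step coef n * (a * (INR n + 2) + c))
      by now rewrite coef_S.
    unfold coef_step in HX. field_simplify in HX; [| lra].
    rewrite !S_INR in *. simpl INR in *. rewrite Rplus_0_l.
    replace (b * (1 * beta * coef (S n) + inner_conv (PS_derive_incr coef) coef (S n)
                  + (INR n + 1 + 1) * coef (S n) * beta))
      with ((a + c) * coef (S n) * (INR n + 3) + b * inner_conv (PS_derive_incr coef) coef (S n))
      by (rewrite <- Hbeta; ring).
    lra.
Qed.

Lemma coef_majorant_step A M N : A = a / (16 * b) -> 1 <= M ->
  24 * A + 6 * Rabs beta + 2 * (1 + c) + 2 * Rabs kap + 1 <= a / 2 * M -> (2 <= N)%nat ->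
  (forall i, (1 <= i <= N)%nat -> Rabs (coef i) <= power_majorant A M i) ->
  Rabs (coef (S N)) <= power_majorant A M (S N).
Proof.
  intros HA HM HK HN IHN. destruct N as [|[|n]]; [lia | lia |].
  set (N := S (S n)). set (t := INR N). set (P := M ^ N).
  assert (HA0 : 0 < A) by (rewrite HA; apply Rdiv_lt_0_compat; lra).
  assert (Ht : 2 <= t) by (unfold t, N; rewrite !S_INR; pose proof (pos_INR n); lra).
  assert (HP : 0 < P) by (apply pow_lt; lra).
  assert (Hwt : forall i, (1 <= i < S N)%nat ->
                  Rabs (PS_derive_incr coef i) <= (t + 1) * power_majorant A M i).
  { intros i Hi. rewrite PS_derive_incr_E, Rabs_mult, Rabs_pos_eq by apply pos_INR.
    apply Rmult_le_compat; [apply pos_INR | apply Rabs_pos | | apply IHN; lia].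
    unfold t. rewrite <- S_INR. apply le_INR. lia. }
  rewrite coef_S. unfold coef_step.
  rewrite (PS_mult_split_ends coef coef (S n) : PS_mult coef coef N = _),
    (PS_mult_split_ends (PS_derive_incr coef) coef (S n) : PS_mult _ coef N = _),
    !PS_derive_incr_E.
  fold N. rewrite coef_0.
  set (I0 := inner_conv coef coef N). set (I1 := inner_conv (PS_derive_incr coef) coef N).
  set (I2 := inner_conv (PS_derive_incr coef) coef (S N)).
  replace (INR N) with t by reflexivity.
  replace (INR (S N)) with (t + 1) by (unfold t; rewrite S_INR; ring).
  replace (PS_incr_1 coef N) with (coef (S n)) by reflexivity.
  match goal with |- Rabs (?num / _) <= _ =>
    replace num with (2 * (2 * beta * coef N + I0) - ((t + 2) * beta * coef N + I1) - b * I2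
                      + ((1 + c) * (t + 1) - 2 * kap) * coef N + (t - 2) * coef (S n))
      by (simpl INR; ring) end.
  replace (power_majorant A M (S N)) with (A * (M * P) / (t + 2) ^ 2).
  2:{ unfold power_majorant. replace (INR (S N)) with (t + 1) by (unfold t; rewrite S_INR; ring).
      change (M ^ S N) with (M * P). field. lra. }
  apply majorant_step_bound; try assumption.
  - rewrite <- (Rmult_1_l (8 * A ^ 2 * P / (t + 2) ^ 2)).
    apply inner_conv_power_majorant; try lra; intros i Hi; [rewrite Rmult_1_l |]; apply IHN; lia.
  - apply inner_conv_power_majorant; try lra; intros i Hi; [apply Hwt | apply IHN]; lia.
  - replace (t + 3) with (INR (S N) + 2) by (unfold t; rewrite S_INR; ring).
    change (M * P) with (M ^ S N).
    apply inner_conv_power_majorant; try lra; intros i Hi; [apply Hwt | apply IHN]; lia.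
  - apply IHN. lia.
  - replace (A * (P / M) / t ^ 2) with (power_majorant A M (S n)); [apply IHN; lia |].
    unfold power_majorant, P, t, N. change (M ^ S (S n)) with (M * M ^ S n).
    rewrite (S_INR (S n)). pose proof (pos_INR (S n)). field. split; lra.
Qed.

Lemma coef_majorant A M : A = a / (16 * b) -> 1 <= M ->
  24 * A + 6 * Rabs beta + 2 * (1 + c) + 2 * Rabs kap + 1 <= a / 2 * M ->
  Rabs (coef 1) <= power_majorant A M 1 -> Rabs (coef 2) <= power_majorant A M 2 ->
  forall j, (1 <= j)%nat -> Rabs (coef j) <= power_majorant A M j.
Proof.
  intros HA HM HK H1 H2 j. induction j as [j IH] using lt_wf_ind. intros Hj.
  destruct j as [|[|[|n]]]; [lia | exact H1 | exact H2 |].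
  apply coef_majorant_step; try assumption; [lia |]. intros i Hi. apply IH; lia.
Qed.

Lemma coef_radius_pos : exists rho, 0 < rho /\ Rbar_le rho (CV_radius coef).
Proof.
  set (A := a / (16 * b)).
  assert (HA : 0 < A) by (apply Rdiv_lt_0_compat; lra).
  set (K := 24 * A + 6 * Rabs beta + 2 * (1 + c) + 2 * Rabs kap + 1).
  (* [M] serves both the induction step and the two initial coefficients. *)
  set (M := 1 + 2 * K / a + 9 * (Rabs (coef 1) + Rabs (coef 2)) / A).
  pose proof (Rabs_pos (coef 1)). pose proof (Rabs_pos (coef 2)).
  assert (HK0 : 0 <= K) by (unfold K; pose proof (Rabs_pos beta); pose proof (Rabs_pos kap); lra).
  assert (T1 : 0 <= 2 * K / a) by (apply Rdiv_le_0_compat; lra).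
  assert (T2 : 0 <= 9 * (Rabs (coef 1) + Rabs (coef 2)) / A) by (apply Rdiv_le_0_compat; lra).
  assert (HM : 1 <= M) by (unfold M; lra).
  assert (HAM : 9 * (Rabs (coef 1) + Rabs (coef 2)) <= A * M).
  { replace (9 * (Rabs (coef 1) + Rabs (coef 2)))
      with (A * (9 * (Rabs (coef 1) + Rabs (coef 2)) / A)) by (field; lra).
    apply Rmult_le_compat_l; unfold M; lra. }
  exists (/ M). split; [apply Rinv_0_lt_compat; lra |].
  apply (CV_radius_power_majorant coef A M); [lra | exact HM |].
  apply coef_majorant; try assumption; try reflexivity.
  - fold K. replace K with (a / 2 * (2 * K / a)) at 1 by (field; lra).
    apply Rmult_le_compat_l; unfold M; lra.
  - unfold power_majorant. replace (A * M ^ 1 / (INR 1 + 1) ^ 2) with (A * M / 4)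
      by (simpl; field). lra.
  - unfold power_majorant. assert (A * M <= A * M ^ 2) by (apply Rmult_le_compat_l; [lra | nra]).
    replace (A * M ^ 2 / (INR 2 + 1) ^ 2) with (A * M ^ 2 / 9) by (simpl; field). lra.
Qed.

Lemma coef_series_ode x : Rbar_lt (Rabs x) (CV_radius coef) ->
  PSeries (PS_derive_incr coef) x
    * (PSeries coef x * (x + b) - (c + (1 + c) * x + x ^ 2))
  = 2 * PSeries coef x * (x * PSeries coef x - (x ^ 2 + kap * x - a / 2)).
Proof.
  intros Hx. set (w := PSeries coef x). set (W := PSeries (PS_derive_incr coef) x).
  assert (Hxw : Rbar_lt (Rabs x) (CV_radius (PS_derive_incr coef)))
    by (rewrite CV_radius_derive_incr; exact Hx).
  assert (PU : is_pseries coef x w) by now apply PSeries_correct, CV_radius_inside.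
  assert (PW : is_pseries (PS_derive_incr coef) x W)
    by now apply PSeries_correct, CV_radius_inside.
  assert (PWU : is_pseries (PS_mult (PS_derive_incr coef) coef) x (W * w))
    by now apply is_pseries_mult.
  assert (PUU : is_pseries (PS_mult coef coef) x (w * w)) by now apply is_pseries_mult.
  assert (Hscal : forall (k : R) s l, is_pseries s x l -> is_pseries (PS_scal k s) x (k * l))
    by (intros k s l H; apply (is_pseries_scal k s x l); [apply Rmult_comm | exact H]).
  assert (Hincr : forall s l, is_pseries s x l -> is_pseries (PS_incr_1 s) x (x * l))
    by (intros s l H; exact (is_pseries_incr_1 s x l H)).
  assert (Hplus : forall s1 s2 l1 l2, is_pseries s1 x l1 -> is_pseries s2 x l2 ->
                    is_pseries (PS_plus s1 s2) x (l1 + l2))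
    by (intros s1 s2 l1 l2 H1 H2; exact (is_pseries_plus s1 s2 x l1 l2 H1 H2)).
  assert (Hres : is_pseries (ode_residual coef) x
     (x * (W * w) + (b * (W * w) + (- c * W + (- (1 + c) * (x * W) + (-1 * (x * (x * W))
      + (-2 * (x * (w * w)) + (2 * (x * (x * w)) + (2 * kap * (x * w) + - a * w))))))))).
  { eapply is_pseries_ext.
    2:{ apply Hplus; [apply Hincr, PWU |].
        apply Hplus; [apply Hscal, PWU |]. apply Hplus; [apply Hscal, PW |].
        apply Hplus; [apply Hscal, Hincr, PW |]. apply Hplus; [apply Hscal, Hincr, Hincr, PW |].
        apply Hplus; [apply Hscal, Hincr, PUU |]. apply Hplus; [apply Hscal, Hincr, Hincr, PU |].
        apply Hplus; [apply Hscal, Hincr, PU |]. apply Hscal, PU. }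
    intros n. unfold ode_residual, PS_plus, PS_scal. simpl. unfold plus, scal; simpl.
    unfold mult; simpl. ring. }
  apply is_pseries_unique in Hres.
  rewrite (PSeries_ext _ (fun _ => 0)), PSeries_const_0 in Hres
    by (intros n; now apply ode_residual_coef).
  lra.
Qed.

End SeriesSolution.

Definition branch_coef (gamma mu : R) : nat -> R :=
  coef ((gamma - 1) * (1 - mu)) (1 + k2 gamma mu) (1 - mu) (2 - k1 gamma mu)
       (gamma * (1 - mu) / (1 + k2 gamma mu)).

Lemma branch_coef_radius_pos gamma mu : 1 < gamma -> mu < 1 ->
  exists rho, 0 < rho /\ Rbar_le rho (CV_radius (branch_coef gamma mu)).
Proof.
  intros Hg Hm. pose proof (k2_pos gamma mu Hg Hm).
  apply coef_radius_pos; [apply Rmult_lt_0_compat | |]; lra.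
Qed.

Lemma branch_series_ode gamma mu U : 1 < gamma -> mu < 1 ->
  Rbar_lt (Rabs (U - 1)) (CV_radius (branch_coef gamma mu)) ->
  PSeries (PS_derive_incr (branch_coef gamma mu)) (U - 1)
    * G_blowup gamma mu (PSeries (branch_coef gamma mu) (U - 1)) U
  = F_blowup gamma mu (PSeries (branch_coef gamma mu) (U - 1)) U.
Proof.
  intros Hg Hm HU. pose proof (k2_pos gamma mu Hg Hm).
  pose proof (coef_series_ode ((gamma - 1) * (1 - mu)) (1 + k2 gamma mu) (1 - mu)
                (2 - k1 gamma mu) (gamma * (1 - mu) / (1 + k2 gamma mu))
                ltac:(apply Rmult_lt_0_compat; lra) ltac:(lra) ltac:(field; lra) (U - 1) HU) as E.
  fold (branch_coef gamma mu) in E.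
  set (w := PSeries (branch_coef gamma mu) (U - 1)) in *.
  unfold G_blowup, F_blowup.
  replace (w * (U + k2 gamma mu) - U * (U - mu))
    with (w * (U - 1 + (1 + k2 gamma mu)) - ((1 - mu) + (1 + (1 - mu)) * (U - 1) + (U - 1) ^ 2))
    by ring.
  rewrite E. unfold k1. field.
Qed.

Lemma is_lim_PSeries_shift (u : nat -> R) (x0 : R) :
  Rbar_lt 0 (CV_radius u) -> is_lim (fun U => PSeries u (U - x0)) x0 (u O).
Proof.
  intros Hr. replace (u O) with (PSeries u (x0 - x0)) by (now rewrite Rminus_eq_0, PSeries_0).
  apply (is_lim_continuity (fun U => PSeries u (U - x0)) x0).
  apply (continuity_pt_comp (fun U => U - x0) (PSeries u)).
  - apply continuity_pt_minus; [apply continuity_pt_id | apply continuity_pt_const; now intros ? ?].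
  - apply PSeries_continuity. now rewrite Rminus_eq_0, Rabs_R0.
Qed.

Lemma is_derive_PSeries_incr_shift (u : nat -> R) (x0 U : R) :
  Rbar_lt (Rabs (U - x0)) (CV_radius u) ->
  is_derive (fun V => PSeries (PS_incr_1 u) (V - x0)) U (PSeries (PS_derive_incr u) (U - x0)).
Proof.
  intros HU. unfold PS_derive_incr.
  rewrite <- (scal_one (PSeries (PS_derive (PS_incr_1 u)) (U - x0))).
  apply (is_derive_comp (PSeries (PS_incr_1 u)) (fun V => V - x0)).
  - apply is_derive_PSeries. now rewrite CV_radius_incr_1.
  - auto_derive; [exact I | reflexivity].
Qed.

Lemma integral_curve_slope_C2 gamma mu : 1 < gamma -> mu < 1 ->
  exists delta h, integral_curve_through_B gamma mu delta h /\
    Derive h 1 = gamma * (1 - mu) / (1 + k2 gamma mu) /\ smooth_near_1 delta h.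
Proof.
  intros Hg Hm. pose proof (k2_pos gamma mu Hg Hm).
  set (u := branch_coef gamma mu).
  destruct (branch_coef_radius_pos gamma mu Hg Hm) as [rho [Hrho Hrad]]. fold u in Hrad.
  assert (Hin : forall x, Rabs x < rho -> Rbar_lt (Rabs x) (CV_radius u))
    by (intros x Hx; apply (Rbar_lt_le_trans _ rho); [exact Hx | exact Hrad]).
  assert (Hu0 : u O = gamma * (1 - mu) / (1 + k2 gamma mu)) by apply coef_0.
  assert (LG : is_lim (fun U => G_blowup gamma mu (PSeries u (U - 1)) U) 1
                 ((gamma - 1) * (1 - mu))).
  { assert (Hr0 := Hin 0 ltac:(rewrite Rabs_R0; exact Hrho)). rewrite Rabs_R0 in Hr0.
    assert (Lw := is_lim_PSeries_shift u 1 Hr0).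
    replace ((gamma - 1) * (1 - mu)) with (G_blowup gamma mu (u O) 1)
      by (rewrite G_blowup_at_B, Hu0; field; lra).
    unfold G_blowup. is_lim_poly. reflexivity. }
  destruct (locally'_Rabs _ _ (is_lim_pos_near _ _ _ LG ltac:(apply Rmult_lt_0_compat; lra)))
    as [dG [HdG HGpos]].
  set (delta := Rmin rho dG).
  assert (Hdelta : 0 < delta) by (apply Rmin_pos; lra).
  assert (Hdrho : delta <= rho) by apply Rmin_l.
  assert (HddG : delta <= dG) by apply Rmin_r.
  set (h := fun U => PSeries (PS_incr_1 u) (U - 1)).
  assert (Hder : forall U, Rabs (U - 1) < delta ->
                   is_derive h U (PSeries (PS_derive_incr u) (U - 1)))
    by (intros U HU; apply is_derive_PSeries_incr_shift, Hin; lra).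
  exists delta, h. split; [| split].
  - split; [exact Hdelta |]. split; [unfold h; now rewrite Rminus_eq_0, PSeries_0 |].
    split; [intros U HU; eexists; now apply Hder |].
    intros U HU.
    assert (HU1 : U <> 1) by (intros ->; rewrite Rminus_eq_0, Rabs_R0 in HU; lra).
    replace (h U) with ((U - 1) * PSeries u (U - 1)) by (unfold h; now rewrite PSeries_incr_1).
    apply ode_blowup; [exact HU1 |].
    assert (HG : 0 < G_blowup gamma mu (PSeries u (U - 1)) U) by (apply HGpos; lra).
    split; [lra |].
    rewrite (is_derive_unique _ _ _ (Hder U ltac:(lra))).
    pose proof (branch_series_ode gamma mu U Hg Hm ltac:(apply Hin; lra)) as E. fold u in E.
    rewrite <- E. field. lra.
  - rewrite (is_derive_unique _ _ _ (Hder 1 ltac:(rewrite Rminus_eq_0, Rabs_R0; exact Hdelta))).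
    rewrite Rminus_eq_0, PSeries_0, PS_derive_incr_E, Hu0. apply Rmult_1_l.
  - intros n U HU. apply (ex_derive_n_comp_trans _ n U (Ropp 1)), ex_derive_n_PSeries.
    rewrite CV_radius_incr_1. apply Hin. exact (Rlt_le_trans _ _ _ HU Hdrho).
Qed.

Lemma integral_curve_zero gamma mu : 0 < mu < 1 ->
  integral_curve_through_B gamma mu (1 - mu) (fun _ => 0).
Proof.
  intros Hm. split; [lra |]. split; [reflexivity |]. split; [intros; apply ex_derive_const |].
  intros U [H0 H1].
  assert (HU1 : U - 1 <> 0) by (intros E; rewrite E, Rabs_R0 in H0; lra).
  assert (HUmu : U - mu <> 0) by (apply Rabs_def2 in H1; lra).
  assert (HU : U <> 0) by (apply Rabs_def2 in H1; lra).
  assert (HG : Gfun gamma mu 0 U <> 0).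
  { unfold Gfun. replace (0 * (U + k2 gamma mu) - U * (U - 1) * (U - mu))
      with (- (U * (U - 1) * (U - mu))) by ring.
    apply Ropp_neq_0_compat.
    apply Rmult_integral_contrapositive; split; [apply Rmult_integral_contrapositive; split |];
      assumption. }
  split; [exact HG |]. rewrite Derive_const. unfold Ffun. field. exact HG.
Qed.

Theorem lemma4p5 (gamma mu : R) (Hg : 1 < gamma < 3) (Hm : 0 < mu < 1) :
  let C1 := 0 in
  let C2 := gamma * (1 - mu) / (1 + k2 gamma mu) in
  (* the two slopes (branches) are distinct *)
  C1 <> C2 /\
  (* every integral curve through B arrives along one of the two branches *)
  (forall delta h, integral_curve_through_B gamma mu delta h ->
     Derive h 1 = C1 \/ Derive h 1 = C2) /\
  (* along each branch: existence of a smooth integral curve, and uniqueness *)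
  (forall c, c = C1 \/ c = C2 ->
     (exists delta h, integral_curve_through_B gamma mu delta h /\
        Derive h 1 = c /\ smooth_near_1 delta h) /\
     (forall delta1 h1 delta2 h2,
        integral_curve_through_B gamma mu delta1 h1 ->
        integral_curve_through_B gamma mu delta2 h2 ->
        Derive h1 1 = c -> Derive h2 1 = c ->
        exists eps, 0 < eps /\ forall U, Rabs (U - 1) < eps -> h1 U = h2 U)) /\
  (* the slope-0 integral curve is H = 0 *)
  (exists delta, integral_curve_through_B gamma mu delta (fun _ => 0)) /\
  (forall delta h, integral_curve_through_B gamma mu delta h -> Derive h 1 = C1 ->
     exists eps, 0 < eps /\ forall U, Rabs (U - 1) < eps -> h U = 0).
Proof.
  intros C1 C2.
  assert (Hg1 : 1 < gamma) by apply Hg. assert (Hm1 : mu < 1) by apply Hm.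
  pose proof (k2_pos gamma mu Hg1 Hm1).
  pose proof (integral_curve_zero gamma mu Hm) as Hzero.
  split; [apply Rlt_not_eq, Rdiv_lt_0_compat; [apply Rmult_lt_0_compat |]; lra |].
  split; [intros delta h; exact (slope_cases gamma mu delta h Hg1 Hm1) |].
  split; [| split; [now exists (1 - mu) |]].
  - intros c Hc. split.
    + destruct Hc as [-> | ->]; [| exact (integral_curve_slope_C2 gamma mu Hg1 Hm1)].
      exists (1 - mu), (fun _ => 0). split; [exact Hzero |].
      split; [apply Derive_const | intros n U _; apply ex_derive_n_const].
    + intros delta1 h1 delta2 h2 H1 H2 E1 E2.
      apply (integral_curve_unique gamma mu delta1 h1 delta2 h2 Hg1 Hm1 H1 H2); [congruence |].
      rewrite E1. exact (slope_nondegenerate gamma mu c Hg1 Hm1 Hc).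
  - intros delta h Hc E.
    apply (integral_curve_unique gamma mu delta h (1 - mu) (fun _ => 0) Hg1 Hm1 Hc Hzero).
    + rewrite Derive_const. exact E.
    + rewrite E. apply (slope_nondegenerate gamma mu C1 Hg1 Hm1). now left.
Qed.
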